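(* Let $K$ be the $2$-uniform tiling of the plane whose vertex types are $[3^1,4^1,6^1,4^1]$ and $[4^1,6^1,12^1]$. If $X$ is a map on the torus that is a quotient $X=K/\Gamma$ of $K$, then the vertices of $X$ form at most $9$ orbits under ${\rm Aut}(X)$.
   Context: A map is a polyhedral map: a cellular embedding of a connected graph in a closed surface such that the intersection of any two distinct faces is empty, a single vertex, or a single edge. For a vertex $u$, the faces containing $u$ form a cyclic sequence (the face-cycle at $u$); if this cyclic sequence consists of consecutive blocks of $n_1$ $p_1$-gons, then $n_2$ $p_2$-gons, ..., then $n_k$ $p_k$-gons, with cyclically consecutive $p_i$ distinct, then $u$ is said to have type $[p_1^{n_1},\dots,p_k^{n_k}]$ (defined up to cyclic shift and reversal). A $2$-uniform tiling is an edge-to-edge tiling of the Euclidean plane $\mathbb{R}^2$ by regular polygons whose symmetry group has exactly two orbits on the set of vertices; viewed as a map on the plane, its vertices have (at most) two types, listed as $[W;Z]$. (Up to isomorphism there are exactly $20$ such tilings; there is exactly one with the vertex types named in the claim.) For a map $K$ on the plane, a quotient of $K$ on the torus is a map $X$ on the torus together with a polyhedral covering map $\eta:K\to X$ with $X=K/\Gamma$, where $\Gamma\le {\rm Aut}(K)$ is a subgroup acting without fixed vertices, edges or faces and $K/\Gamma$ is homeomorphic to the torus. ${\rm Aut}(X)$ denotes the automorphism group of the map $X$, acting on its vertex set $V(X)$. *)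

From mathcomp Require Import all_boot all_order all_algebra.
Set Implicit Arguments. Unset Strict Implicit. Unset Printing Implicit Defensive.
Import GRing.Theory Num.Theory.

(* A map (cellular embedding of a connected graph in a closed surface, or in *)
(* the plane) is encoded by its set of flags F (vertex-edge-face incidences) *)
(* together with the three involutions rho0 (change the vertex), rho1       *)
(* (change the edge) and rho2 (change the face).                             *)

Record mapstr (F : Type) := MapStr {
  rho0 : F -> F; rho1 : F -> F; rho2 : F -> F }.

Inductive reach2 (F : Type) (f g : F -> F) (x : F) : F -> Prop :=
  | reach2_refl : reach2 f g x x
  | reach2_f y : reach2 f g x y -> reach2 f g x (f y)
  | reach2_g y : reach2 f g x y -> reach2 f g x (g y).

Inductive reach3 (F : Type) (f g h : F -> F) (x : F) : F -> Prop :=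
  | reach3_refl : reach3 f g h x x
  | reach3_f y : reach3 f g h x y -> reach3 f g h x (f y)
  | reach3_g y : reach3 f g h x y -> reach3 f g h x (g y)
  | reach3_h y : reach3 f g h x y -> reach3 f g h x (h y).

Section Maps.
Variables (F : Type) (M : mapstr F).

Definition same_vertex x y := reach2 (rho1 M) (rho2 M) x y.
Definition same_edge x y := reach2 (rho0 M) (rho2 M) x y.
Definition same_face x y := reach2 (rho0 M) (rho1 M) x y.

Definition is_map : Prop :=
  [/\ [/\ involutive (rho0 M), involutive (rho1 M) & involutive (rho2 M)],
      (forall x, [/\ rho0 M x <> x, rho1 M x <> x & rho2 M x <> x]),
      (forall x, rho0 M (rho2 M x) = rho2 M (rho0 M x) /\ rho0 M (rho2 M x) <> x)
    & (forall x y, reach3 (rho0 M) (rho1 M) (rho2 M) x y)].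

Definition is_aut (g : F -> F) : Prop :=
  bijective g /\
  forall x, [/\ g (rho0 M x) = rho0 M (g x), g (rho1 M x) = rho1 M (g x)
              & g (rho2 M x) = rho2 M (g x)].

Definition is_aut_subgroup (Gam : (F -> F) -> Prop) : Prop :=
  [/\ Gam id,
      (forall g h, Gam g -> Gam h -> Gam (g \o h)),
      (forall g, Gam g -> exists2 h, Gam h & cancel g h /\ cancel h g)
    & (forall g, Gam g -> is_aut g)].

Definition no_fixed_cells (Gam : (F -> F) -> Prop) : Prop :=
  forall g, Gam g -> (exists x, g x <> x) ->
  forall x, [/\ ~ same_vertex (g x) x, ~ same_edge (g x) x & ~ same_face (g x) x].

End Maps.

Definition is_quotient_map (FK FX : Type) (K : mapstr FK) (X : mapstr FX)
    (Gam : (FK -> FK) -> Prop) (eta : FK -> FX) : Prop :=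
  [/\ (forall x, [/\ eta (rho0 K x) = rho0 X (eta x),
                     eta (rho1 K x) = rho1 X (eta x)
                   & eta (rho2 K x) = rho2 X (eta x)]),
      (forall z, exists x, eta x = z)
    & (forall x y, eta x = eta y <-> exists2 g, Gam g & g x = y)].

Section FiniteMaps.
Variables (F : finType) (M : mapstr F).

Definition vrel : rel F := fun x y => (y == rho1 M x) || (y == rho2 M x).
Definition erel : rel F := fun x y => (y == rho0 M x) || (y == rho2 M x).
Definition frel : rel F := fun x y => (y == rho0 M x) || (y == rho1 M x).

Definition vclass (x : F) : {set F} := [set y | connect vrel x y].
Definition eclass (x : F) : {set F} := [set y | connect erel x y].
Definition fclass (x : F) : {set F} := [set y | connect frel x y].

Definition vertices : {set {set F}} := [set vclass x | x : F].
Definition edges : {set {set F}} := [set eclass x | x : F].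
Definition faces : {set {set F}} := [set fclass x | x : F].

Definition verts_of (A : {set F}) : {set {set F}} := [set vclass x | x in A].
Definition edges_of (A : {set F}) : {set {set F}} := [set eclass x | x in A].

Definition euler_char : int := (#|vertices|%:Z - #|edges|%:Z + #|faces|%:Z)%R.

Definition orientable : Prop :=
  exists c : F -> bool, forall x,
    [/\ c (rho0 M x) = ~~ c x, c (rho1 M x) = ~~ c x & c (rho2 M x) = ~~ c x].

Definition is_torus_map : Prop := [/\ is_map M, orientable & euler_char = 0%R].

Definition polyhedral : Prop :=
  forall x y : F, fclass x != fclass y ->
    let CV := verts_of (fclass x) :&: verts_of (fclass y) in
    let CE := edges_of (fclass x) :&: edges_of (fclass y) in
    (CE = set0 /\ #|CV| <= 1) \/
    (exists e, [/\ e \in edges, CE = [set e], CV = verts_of e & #|CV| = 2]).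

End FiniteMaps.

(* start from the rhombitrihexagonal tiling 3.4.6.4 (unit edges), hexagon    *)
(* centres forming the triangular lattice L = Z a + Z b, |a|=|b|=1+sqrt 3,   *)
(* angle(a,b) = 60 deg.  For every hexagon centred at a point of 2L, replace *)
(* the rosette (that hexagon, its 6 adjacent squares and 6 triangles) by one *)
(* regular dodecagon.  The translation group of K is 2L.  A fundamental      *)
(* domain contains 18 vertices (6 of type 3.4.6.4, 12 of type 4.6.12), 60    *)
(* edges and 120 flags.  A flag of K is (s, t, k) : it is the translate by    *)
(* s*(2a) + t*(2b) of the k-th flag of the fundamental domain.  Flags are    *)
(* numbered by vertex: local vertex j (0<=j<18) owns 2*deg(j) consecutive    *)
(* flags; local vertex types (faces in cyclic order around the vertex):      *)
(*  0:[6,12,4] 1:[6,4,3,4] 2:[12,6,4] 3:[4,6,12] 4:[4,3,4,6] 5:[4,12,6]       *)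
(*  6:[6,4,12] 7:[6,12,4] 8:[4,6,4,3] 9:[12,6,4] 10:[12,4,6] 11:[4,3,4,6]    *)
(*  12:[6,4,3,4] 13:[6,4,12] 14:[4,6,12] 15:[3,4,6,4] 16:[4,12,6]           *)
(*  17:[12,4,6].                                                            *)
(* rho1, rho2 keep the vertex (hence the translate); rho0 of flag k is the   *)
(* flag j of the translate shifted by (o1 - 1, o2 - 1), where                *)
(* (o1, o2, j) = nth _ K_r0_tab k.                                           *)

Definition K_r0_tab : seq (nat * nat * nat) := [::
  (1,1,39); (1,1,6); (1,1,111); (1,1,36); (1,1,9); (1,1,108);
  (1,1,1); (1,1,16); (1,1,103); (1,1,4); (1,1,75); (1,1,100);
  (1,1,19); (1,1,72); (1,1,25); (1,1,66); (1,1,7); (1,1,22);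
  (1,1,69); (1,1,12); (1,1,27); (1,0,90); (1,1,17); (1,1,32);
  (1,0,93); (1,1,14); (1,0,87); (1,1,20); (2,0,59); (1,0,84);
  (1,1,35); (2,0,56); (1,1,23); (1,1,38); (2,0,51); (1,1,30);
  (1,1,3); (2,0,48); (1,1,33); (1,1,0); (1,1,79); (1,1,46);
  (1,1,95); (1,1,76); (1,1,49); (1,1,98); (1,1,41); (1,1,54);
  (0,2,37); (1,1,44); (1,1,57); (0,2,34); (1,1,65); (0,1,82);
  (1,1,47); (1,1,62); (0,2,31); (1,1,50); (0,1,85); (0,2,28);
  (1,1,67); (0,1,114); (1,1,55); (1,1,70); (0,1,117); (1,1,52);
  (1,1,15); (1,1,60); (1,1,73); (1,1,18); (1,1,63); (1,1,78);
  (1,1,13); (1,1,68); (1,1,101); (1,1,10); (1,1,43); (1,1,106);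
  (1,1,71); (1,1,40); (1,1,119); (1,1,88); (2,1,53); (1,1,116);
  (1,2,29); (2,1,58); (1,1,91); (1,2,26); (1,1,81); (1,1,96);
  (1,2,21); (1,1,86); (1,1,99); (1,2,24); (1,1,107); (1,1,42);
  (1,1,89); (1,1,104); (1,1,45); (1,1,92); (1,1,11); (1,1,74);
  (1,1,109); (1,1,8); (1,1,97); (1,1,112); (1,1,77); (1,1,94);
  (1,1,5); (1,1,102); (1,1,115); (1,1,2); (1,1,105); (1,1,118);
  (2,1,61); (1,1,110); (1,1,83); (2,1,64); (1,1,113); (1,1,80)].
Definition K_r1_tab : seq nat := [::
  1 ;0 ;3 ;2 ;5 ;4 ;7 ;6 ;9 ;8 ;11 ;10 ;13 ;12 ;15 ;14 ;17 ;16 ;19 ;18;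
  21 ;20 ;23 ;22 ;25 ;24 ;27 ;26 ;29 ;28 ;31 ;30 ;33 ;32 ;35 ;34 ;37 ;36 ;39 ;38;
  41 ;40 ;43 ;42 ;45 ;44 ;47 ;46 ;49 ;48 ;51 ;50 ;53 ;52 ;55 ;54 ;57 ;56 ;59 ;58;
  61 ;60 ;63 ;62 ;65 ;64 ;67 ;66 ;69 ;68 ;71 ;70 ;73 ;72 ;75 ;74 ;77 ;76 ;79 ;78;
  81 ;80 ;83 ;82 ;85 ;84 ;87 ;86 ;89 ;88 ;91 ;90 ;93 ;92 ;95 ;94 ;97 ;96 ;99 ;98;
  101 ;100 ;103 ;102 ;105 ;104 ;107 ;106 ;109 ;108 ;111 ;110 ;113 ;112 ;115 ;114 ;117 ;116 ;119 ;118].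
Definition K_r2_tab : seq nat := [::
  3 ;4 ;5 ;0 ;1 ;2 ;9 ;12 ;11 ;6 ;13 ;8 ;7 ;10 ;17 ;18 ;19 ;14 ;15 ;16;
  23 ;24 ;25 ;20 ;21 ;22 ;29 ;32 ;31 ;26 ;33 ;28 ;27 ;30 ;37 ;38 ;39 ;34 ;35 ;36;
  43 ;44 ;45 ;40 ;41 ;42 ;49 ;50 ;51 ;46 ;47 ;48 ;55 ;58 ;57 ;52 ;59 ;54 ;53 ;56;
  63 ;64 ;65 ;60 ;61 ;62 ;69 ;70 ;71 ;66 ;67 ;68 ;75 ;78 ;77 ;72 ;79 ;74 ;73 ;76;
  83 ;86 ;85 ;80 ;87 ;82 ;81 ;84 ;91 ;92 ;93 ;88 ;89 ;90 ;97 ;98 ;99 ;94 ;95 ;96;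
  103 ;106 ;105 ;100 ;107 ;102 ;101 ;104 ;111 ;112 ;113 ;108 ;109 ;110 ;117 ;118 ;119 ;114 ;115 ;116].

Definition KF : Type := (int * int * 'I_120)%type.

Local Open Scope ring_scope.

Definition K_r0 (x : KF) : KF :=
  let: (s, t, k) := x in
  let: (o1, o2, j) := nth (1, 1, 0)%N K_r0_tab k in
  (s + (o1%:Z - 1), t + (o2%:Z - 1), inord j).

Definition K_r1 (x : KF) : KF :=
  let: (s, t, k) := x in (s, t, inord (nth 0%N K_r1_tab k)).

Definition K_r2 (x : KF) : KF :=
  let: (s, t, k) := x in (s, t, inord (nth 0%N K_r2_tab k)).

Definition K : mapstr KF := MapStr K_r0 K_r1 K_r2.

Local Close Scope ring_scope.

Definition K_tab_ok : bool :=
  [&& size K_r0_tab == 120, size K_r1_tab == 120, size K_r2_tab == 120 &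
  all (fun k =>
    let: (o1, o2, j) := nth (1, 1, 0) K_r0_tab k in
    let: (p1, p2, k') := nth (1, 1, 0) K_r0_tab j in
    let r1 := nth 0 K_r1_tab in let r2 := nth 0 K_r2_tab in
    let: (q1, q2, m) := nth (1, 1, 0) K_r0_tab (r2 k) in
    [&& j < 120, k' == k, o1 + p1 == 2, o2 + p2 == 2, j != k,
        r1 k < 120, r1 (r1 k) == k, r1 k != k,
        r2 k < 120, r2 (r2 k) == k, r2 k != k,
        r2 j == m, (o1, o2) == (q1, q2) & m != k])
    (iota 0 120)].

Lemma K_tab_okP : K_tab_ok. Proof. by vm_compute. Qed.

(* The argument is
   combinatorial, the finite checks being done by computation on the tables
   that define K:
   1. K is connected: every flag is reached from the base flag x0 by a word
      in the three involutions (words found by breadth-first search), so an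
      automorphism of K is determined by the image of x0.
   2. The five rotations about a dodecagon centre are affine automorphisms
      of K, and every translate of each of them fixes some face.
   3. A deck transformation preserves the parity of flags (X is orientable)
      and the local shape at x0, so it maps x0 like a translation or a
      rotation; fixing no face, it is a translation.
   4. Hence the translations and the half-turn normalise the deck group and
      descend to automorphisms of X.
   5. Every flag lies on the vertex of one of 9 representative flags moved
      by such a symmetry; their images in X represent all vertex orbits. *)

From mathcomp Require Import all_boot all_order all_algebra zify ring.
Set Implicit Arguments. Unset Strict Implicit. Unset Printing Implicit Defensive.
Import GRing.Theory Num.Theory.
Local Open Scope ring_scope.

Definition rho (i : nat) : KF -> KF :=
  match i with 0%N => K_r0 | 1%N => K_r1 | _ => K_r2 end.

Fixpoint wapp (w : seq nat) (x : KF) : KF :=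
  if w is i :: w' then wapp w' (rho i x) else x.

Definition tr (a b : int) (x : KF) : KF :=
  let: (s, t, k) := x in (s + a, t + b, k).

Definition x0 : KF := (0, 0, ord0).

(* A copy of K on int * int * nat, on which the tables are evaluated by
   [vm_compute]; [piK] embeds the flags of K into it. *)
Definition KN := (int * int * nat)%type.

Definition rhoN (i : nat) (x : KN) : KN :=
  let: (s, t, k) := x in
  match i with
  | 0%N => let: (o1, o2, j) := nth (1, 1, 0)%N K_r0_tab k in
           (s + (o1%:Z - 1), t + (o2%:Z - 1), j)
  | 1%N => (s, t, nth 0%N K_r1_tab k)
  | _ => (s, t, nth 0%N K_r2_tab k)
  end.

Fixpoint wappN (w : seq nat) (x : KN) : KN :=
  if w is i :: w' then wappN w' (rhoN i x) else x.

Definition trN (a b : int) (x : KN) : KN :=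
  let: (s, t, k) := x in (s + a, t + b, k).

Definition piK (x : KF) : KN := let: (s, t, k) := x in (s, t, nat_of_ord k).

Lemma K_tabs_bounded :
  [&& size K_r0_tab == 120%N, size K_r1_tab == 120%N, size K_r2_tab == 120%N,
      all (fun p : nat * nat * nat => p.2 < 120)%N K_r0_tab,
      all (fun j => j < 120)%N K_r1_tab & all (fun j => j < 120)%N K_r2_tab].
Proof. by vm_compute. Qed.

Lemma piK_inj : injective piK.
Proof. by move=> [[s t] k] [[s' t'] k'] /= [-> -> /val_inj ->]. Qed.

Lemma piK_rho i x : piK (rho i x) = rhoN i (piK x).
Proof.
case: x => [[s t] k].
have /and5P [/eqP s0 /eqP s1 /eqP s2 a0 /andP [a1 a2]] := K_tabs_bounded.
have bnd (T : Type) (d : T) (tab : seq T) P : all P tab -> size tab = 120%N ->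
    P (nth d tab k) by move=> /all_nthP H e; apply: H; rewrite e.
case: i => [|[|i]] /=.
- by move: (bnd _ (1, 1, 0)%N _ _ a0 s0); case: nth => [[o1 o2] j] /= hj; rewrite inordK.
- by rewrite inordK // (bnd _ 0%N _ _ a1 s1).
- by rewrite inordK // (bnd _ 0%N _ _ a2 s2).
Qed.

Lemma piK_wapp w x : piK (wapp w x) = wappN w (piK x).
Proof. by elim: w x => //= i w IH x; rewrite IH piK_rho. Qed.

Lemma piK_tr a b x : piK (tr a b x) = trN a b (piK x).
Proof. by case: x => [[s t] k]. Qed.

Lemma rhoN_tr i a b x : rhoN i (trN a b x) = trN a b (rhoN i x).
Proof.
case: x => [[s t] k]; case: i => [|[|i]] //=.
by case: nth => [[o1 o2] j] /=; congr (_, _, _); lia.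
Qed.

Lemma wappN_tr w a b x : wappN w (trN a b x) = trN a b (wappN w x).
Proof. by elim: w x => //= i w IH x; rewrite rhoN_tr IH. Qed.

Lemma rho_tr i a b x : rho i (tr a b x) = tr a b (rho i x).
Proof. by apply: piK_inj; rewrite piK_rho !piK_tr piK_rho rhoN_tr. Qed.

Lemma wapp_tr w a b x : wapp w (tr a b x) = tr a b (wapp w x).
Proof. by elim: w x => //= i w IH x; rewrite rho_tr IH. Qed.

Lemma wapp_cat w1 w2 x : wapp (w1 ++ w2) x = wapp w2 (wapp w1 x).
Proof. by elim: w1 x => //= i w IH x. Qed.

Lemma tr_tr a b c d x : tr a b (tr c d x) = tr (c + a) (d + b) x.
Proof. by case: x => [[s t] k] /=; rewrite !addrA. Qed.

Lemma tr0 x : tr 0 0 x = x.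
Proof. by case: x => [[s t] k] /=; rewrite !addr0. Qed.

Lemma trK a b : cancel (tr a b) (tr (- a) (- b)).
Proof. by move=> x; rewrite tr_tr !subrr tr0. Qed.

Lemma trNK a b : cancel (tr (- a) (- b)) (tr a b).
Proof. by move=> x; rewrite tr_tr !addNr tr0. Qed.

Lemma tr_local (s t : int) (k : 'I_120) : (s, t, k) = tr s t (0, 0, k).
Proof. by rewrite /= !add0r. Qed.

Lemma trN_local (s t : int) (k : nat) : (s, t, k) = trN s t (0, 0, k).
Proof. by rewrite /= !add0r. Qed.

(* Breadth-first search in the graph on the 120 flag positions of the
   fundamental domain, using the given letters: [bfs letters k0] lists pairs
   (k, w) where the word w leads from position k0 to position k. *)
Definition step_pos (i k : nat) : nat := (rhoN i (0, 0, k)).2.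

Definition grow (letters : seq nat) (known frontier : seq (nat * seq nat)) :=
  foldl (fun acc kw => foldl (fun acc i =>
      let k' := step_pos i kw.1 in
      if k' \in unzip1 acc then acc else rcons acc (k', rcons kw.2 i))
    acc letters) known frontier.

Fixpoint bfs_loop (fuel : nat) (letters : seq nat)
    (known frontier : seq (nat * seq nat)) : seq (nat * seq nat) :=
  if fuel is n.+1 then
    let known' := grow letters known frontier in
    if size known' == size known then known
    else bfs_loop n letters known' (drop (size known) known')
  else known.

Definition bfs (letters : seq nat) (k0 : nat) : seq (nat * seq nat) :=
  bfs_loop 120 letters [:: (k0, [::])] [:: (k0, [::])].

(* Searches are only ever evaluated by [vm_compute]; [simpl] must not
   unfold them. *)
Arguments bfs : simpl never.

Definition tree_word (tree : seq (nat * seq nat)) (k : nat) : seq nat :=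
  nth [::] (unzip2 tree) (index k (unzip1 tree)).

(* A spanning tree of the positions, rooted at the base position 0:
   [word k] leads from x0 to some translate of position k. *)
Definition span_tree : seq (nat * seq nat) := bfs [:: 0; 1; 2]%N 0.

Notation word k := (tree_word span_tree k).

(* Even words realising the translations by the two periods. *)
Definition Wx : seq nat := [:: 2; 1; 0; 1; 0; 1; 0; 1; 0; 1; 0; 1; 2; 1; 0; 1; 0; 1]%N.
Definition Wy : seq nat := [:: 2; 1; 0; 1; 0; 2; 1; 0; 1; 2; 1; 0; 1; 2; 1; 0; 1; 0]%N.

Definition words_check (tree : seq (nat * seq nat)) : bool :=
  [&& all (fun k => (wappN (tree_word tree k) (0, 0, 0%N)).2 == k) (iota 0 120),
      wappN Wx (0, 0, 0%N) == (1, 0, 0%N), wappN (rev Wx) (0, 0, 0%N) == (-1, 0, 0%N),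
      wappN Wy (0, 0, 0%N) == (0, 1, 0%N), wappN (rev Wy) (0, 0, 0%N) == (0, -1, 0%N) &
      ~~ odd (size Wx) && ~~ odd (size Wy)].

Lemma words_ok : words_check span_tree.
Proof. by vm_compute. Qed.

Definition even_shift (s t : int) (w : seq nat) : Prop :=
  wapp w x0 = (s, t, ord0) /\ ~~ odd (size w).

Lemma even_shift_cat s t u v w w' :
  even_shift s t w -> even_shift u v w' -> even_shift (s + u) (t + v) (w ++ w').
Proof.
move=> [hw ew] [hw' ew']; split; last by rewrite size_cat oddD (negbTE ew) (negbTE ew').
by rewrite wapp_cat hw (tr_local s t) wapp_tr hw' /= [u + s]addrC [v + t]addrC.
Qed.

Lemma even_shift_periods :
  [/\ even_shift 1 0 Wx, even_shift (-1) 0 (rev Wx),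
      even_shift 0 1 Wy & even_shift 0 (-1) (rev Wy)].
Proof.
have /and5P [_ hx hx' hy /andP [hy' /andP [ex ey]]] := words_ok.
by split; (split; [apply: piK_inj; rewrite piK_wapp; apply/eqP | rewrite ?size_rev]).
Qed.

Lemma even_shift_all s t : exists w, even_shift s t w.
Proof.
have [px mx py my] := even_shift_periods.
suff [w hw] : exists w, even_shift s 0 w.
  elim/int_rect: t => [|n [w' hw'] | n [w' hw']]; first by exists w.
  - exists (w' ++ Wy); rewrite -addn1 PoszD.
    by have := even_shift_cat hw' py; rewrite addr0.
  - exists (w' ++ rev Wy); rewrite -addn1 PoszD opprD.
    by have := even_shift_cat hw' my; rewrite addr0.
elim/int_rect: s => [|n [w hw] | n [w hw]]; first by exists [::].
- exists (w ++ Wx); rewrite -addn1 PoszD.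
  by have := even_shift_cat hw px; rewrite addr0.
- exists (w ++ rev Wx); rewrite -addn1 PoszD opprD.
  by have := even_shift_cat hw mx; rewrite addr0.
Qed.

Definition odd_pos (k : nat) : bool := odd (size (word k)).

Lemma reach_all (x : KF) : exists w, wapp w x0 = x /\ odd (size w) = odd_pos x.2.
Proof.
case: x => [[s t] k].
have /andP [/allP hword _] := words_ok.
have := hword k; rewrite mem_iota ltn_ord => /(_ isT) /eqP.
case E : (wappN _ (0, 0, 0%N)) => [[a b] k'] ek.
have {}ek : k' = k := ek; subst k'.
have [w [hw ew]] := even_shift_all (s - a) (t - b).
exists (w ++ word k); split; last first.
  rewrite size_cat oddD (negbTE ew) addFb /odd_pos.
  exact: erefl.
rewrite wapp_cat hw (tr_local (s - a)) wapp_tr; apply: piK_inj.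
rewrite piK_tr piK_wapp [piK _]/= E /=; congr (_, _, _); lia.
Qed.

(* Maps commuting with the three involutions; by connectivity such a map is
   determined by the image of the base flag x0. *)
Definition commK (f : KF -> KF) : Prop := forall i x, f (rho i x) = rho i (f x).

Lemma aut_commK g : is_aut K g -> commK g.
Proof. by move=> [_ H] [|[|i]] x /=; case: (H x). Qed.

Lemma wapp_comm f w x : commK f -> f (wapp w x) = wapp w (f x).
Proof. by move=> hf; elim: w x => //= i w IH x; rewrite IH hf. Qed.

Lemma commK_eq f h : commK f -> commK h -> f x0 = h x0 -> f =1 h.
Proof. by move=> hf hh e x; have [w [<- _]] := reach_all x; rewrite !wapp_comm // e. Qed.

Lemma tr_comm a b : commK (tr a b).
Proof. by move=> i x; rewrite rho_tr. Qed.

Definition mat := (int * int * int * int)%type.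

Definition affN (A : mat) (ct : seq (int * int * nat)) (s t : int) (x : KN) : KN :=
  let: (u, v, k) := x in
  let: (a11, a12, a21, a22) := A in
  let: (c1, c2, j) := nth (0, 0, 0%N) ct k in
  (a11 * u + a12 * v + c1 + s, a21 * u + a22 * v + c2 + t, j).

Definition aff (A : mat) (ct : seq (int * int * nat)) (s t : int) (x : KF) : KF :=
  let: (u, v, k) := x in
  let: (a11, a12, a21, a22) := A in
  let: (c1, c2, j) := nth (0, 0, 0%N) ct k in
  (a11 * u + a12 * v + c1 + s, a21 * u + a22 * v + c2 + t, inord j).

(* A well-formed table whose affine map commutes with the involutions on the
   fundamental domain (this suffices, by translation invariance). *)
Definition affine_ok (A : mat) (ct : seq (int * int * nat)) : bool :=
  [&& size ct == 120%N, all (fun p : int * int * nat => p.2 < 120)%N ct &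
      all (fun k => all (fun i => affN A ct 0 0 (rhoN i (0, 0, k)) ==
                                  rhoN i (affN A ct 0 0 (0, 0, k))) [:: 0; 1; 2]%N)
          (iota 0 120)].

Lemma piK_aff A ct s t x : affine_ok A ct -> piK (aff A ct s t x) = affN A ct s t (piK x).
Proof.
case/and3P => /eqP hs /all_nthP hb _; case: x => [[u v] k] /=.
case: A => [[[a11 a12] a21] a22].
have := hb (0, 0, 0%N) k; rewrite hs ltn_ord => /(_ isT).
by case: nth => [[c1 c2] j] /= hj; rewrite inordK.
Qed.

Lemma affN_shift A ct s t (x : KN) :
  affN A ct s t x = trN s t (affN A ct 0 0 x).
Proof.
case: x A => [[u v] k] [[[a11 a12] a21] a22] /=.
by case: nth => [[c1 c2] j] /=; rewrite !addr0.
Qed.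

Lemma affN_tr a11 a12 a21 a22 ct a b (x : KN) :
  let A := (a11, a12, a21, a22) in
  affN A ct 0 0 (trN a b x) =
  trN (a11 * a + a12 * b) (a21 * a + a22 * b) (affN A ct 0 0 x).
Proof.
case: x => [[u v] k] /=.
by case: nth => [[c1 c2] j] /=; congr (_, _, _); ring.
Qed.

Lemma aff_comm A ct s t : affine_ok A ct -> commK (aff A ct s t).
Proof.
move=> hA i [[u v] k]; apply: piK_inj; rewrite piK_aff // !piK_rho piK_aff //.
rewrite [piK _]/= (trN_local u v k) rhoN_tr !(affN_shift _ _ s t) rhoN_tr.
congr trN; case: A hA => [[[a11 a12] a21] a22] hA.
rewrite !affN_tr rhoN_tr; congr trN.
case/and3P: hA => _ _ /allP /(_ k); rewrite mem_iota ltn_ord => /(_ isT).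
by case/and4P => /eqP h0 /eqP h1 /eqP h2 _; case: i => [|[|i]].
Qed.

(* The table of the affine map with linear part A sending x0 to position j:
   the image of the flag [wapp (word k) x0] must be [wapp (word k)] of the
   image of x0. *)
Definition rot_table (A : mat) (j : nat) : seq (int * int * nat) :=
  let tree := span_tree in
  let: (a11, a12, a21, a22) := A in
  [seq let: (a, b, _) := wappN (tree_word tree k) (0, 0, 0%N) in
       let: (c1, c2, m) := wappN (tree_word tree k) (0, 0, j) in
       (c1 - (a11 * a + a12 * b), c2 - (a21 * a + a22 * b), m) | k <- iota 0 120].
Arguments rot_table : simpl never.

(* The five non-trivial rotations about a dodecagon centre, given by their
   linear part on the period lattice and the image position of x0. *)
Definition turn60 : mat * nat := ((0, -1, 1, 1), 46%N).
Definition turn120 : mat * nat := ((-1, -1, 1, 0), 96%N).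
Definition turn180 : mat * nat := ((-1, 0, 0, -1), 22%N).
Definition turn240 : mat * nat := ((0, 1, -1, -1), 70%N).
Definition turn300 : mat * nat := ((1, 1, -1, 0), 118%N).
Definition turns : seq (mat * nat) := [:: turn60; turn120; turn180; turn240; turn300].

Definition rotation (p : mat * nat) (s t : int) : KF -> KF :=
  aff p.1 (rot_table p.1 p.2) s t.

Lemma turns_ok : all (fun p => affine_ok p.1 (rot_table p.1 p.2) &&
    (affN p.1 (rot_table p.1 p.2) 0 0 (0, 0, 0%N) == (0, 0, p.2))) turns.
Proof. by vm_compute. Qed.

Lemma rotation_comm p s t : p \in turns -> commK (rotation p s t).
Proof. by move=> /(allP turns_ok) /andP [hA _]; apply: aff_comm. Qed.

Lemma rotation_x0 p s t : p \in turns -> piK (rotation p s t x0) = (s, t, p.2).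
Proof.
move=> /(allP turns_ok) /andP [hA /eqP h0].
by rewrite piK_aff // affN_shift [piK _]/= h0 /= !add0r.
Qed.

Lemma reach2_trans (F : Type) (f g : F -> F) x y z :
  reach2 f g x y -> reach2 f g y z -> reach2 f g x z.
Proof. by move=> hxy; elim=> [//|z' _ IH|z' _ IH]; [apply: reach2_f | apply: reach2_g]. Qed.

Lemma face_word y w : all (fun i => i < 2)%N w -> same_face K y (wapp w y).
Proof.
elim: w y => [|i w IH] y /=; first by move=> _; apply: reach2_refl.
case/andP=> hi hw; apply: reach2_trans (IH _ hw).
by case: i hi => [|[|//]] _; [apply/reach2_f/reach2_refl | apply/reach2_g/reach2_refl].
Qed.

Lemma aff_fixes_face a11 a12 a21 a22 ct s t u v (k : nat) w (d1 d2 : int) :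
  affine_ok (a11, a12, a21, a22) ct ->
  wappN w (affN (a11, a12, a21, a22) ct 0 0 (0, 0, k)) = (d1, d2, k) ->
  (k < 120)%N -> all (fun i => i < 2)%N w ->
  a11 * u + a12 * v + s + d1 = u -> a21 * u + a22 * v + t + d2 = v ->
  same_face K (aff (a11, a12, a21, a22) ct s t (u, v, inord k)) (u, v, inord k).
Proof.
move=> hA hW hk hw e1 e2.
have E : (u, v, inord k) = wapp w (aff (a11, a12, a21, a22) ct s t (u, v, inord k)).
  apply: piK_inj; rewrite piK_wapp piK_aff // [piK _]/= inordK // (trN_local u v k).
  rewrite affN_shift affN_tr !wappN_tr hW /=; congr (_, _, _); lia.
by rewrite {2}E; apply: face_word.
Qed.

Lemma turn_affine_ok p : p \in turns -> affine_ok p.1 (rot_table p.1 p.2).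
Proof. by move=> /(allP turns_ok) /andP []. Qed.

Ltac face_by p fw sh1 sh2 :=
  apply: (aff_fixes_face (w := fw) (d1 := sh1) (d2 := sh2) (@turn_affine_ok p isT));
  [by vm_compute | by [] | by [] | lia | lia].

Lemma turn60_fixes_face s t : exists x, same_face K (rotation turn60 s t x) x.
Proof. by exists (- t - 1, s + t, inord 2); face_by turn60 [:: 0; 1; 0; 1]%N (-1)%Z 1%Z. Qed.

Lemma turn120_fixes_face s t : exists x, same_face K (rotation turn120 s t x) x.
Proof.
have [h|[h|h]] : ((s + 2 * t) %% 3 = 0 \/ (s + 2 * t) %% 3 = 1 \/ (s + 2 * t) %% 3 = 2)%Z by lia.
- exists (((s - t) %/ 3)%Z, ((s + 2 * t) %/ 3)%Z, inord 10).
  face_by turn120 [:: 0; 1]%N 0%Z 0%Z.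
- exists (((s - 1 - t) %/ 3)%Z, ((s - 1 + 2 * t) %/ 3)%Z + 1, inord 28).
  face_by turn120 [:: 0; 1]%N 0%Z 1%Z.
- exists (((s - 2 - t) %/ 3)%Z, ((s - 2 + 2 * t) %/ 3)%Z + 1, inord 2).
  face_by turn120 [:: 0; 1; 0; 1; 0; 1; 0; 1]%N (-1)%Z 1%Z.
Qed.

Lemma turn180_fixes_face s t : exists x, same_face K (rotation turn180 s t x) x.
Proof.
have [hs|hs] : (s %% 2 = 0 \/ s %% 2 = 1)%Z by lia.
all: have [ht|ht] : (t %% 2 = 0 \/ t %% 2 = 1)%Z by lia.
- exists ((s %/ 2)%Z, (t %/ 2)%Z, inord 0).
  face_by turn180 [:: 0; 1; 0; 1; 0; 1]%N 0%Z 0%Z.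
- exists ((s %/ 2)%Z, ((t - 1) %/ 2)%Z, inord 80).
  face_by turn180 [:: 0; 1; 0; 1; 0; 1]%N 0%Z (-1)%Z.
- exists (((s - 1) %/ 2)%Z, (t %/ 2)%Z, inord 2).
  face_by turn180 [:: 0; 1; 0; 1; 0; 1; 0; 1; 0; 1; 0; 1]%N (-1)%Z 0%Z.
- exists (((s - 1) %/ 2)%Z + 1, ((t - 1) %/ 2)%Z, inord 40).
  face_by turn180 [:: 0; 1; 0; 1; 0; 1]%N 1%Z (-1)%Z.
Qed.

Lemma turn240_fixes_face s t : exists x, same_face K (rotation turn240 s t x) x.
Proof.
have [h|[h|h]] : ((s + 2 * t) %% 3 = 0 \/ (s + 2 * t) %% 3 = 1 \/ (s + 2 * t) %% 3 = 2)%Z by lia.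
- exists (((2 * s + t) %/ 3)%Z, ((t - s) %/ 3)%Z, inord 10).
  face_by turn240 [:: 1; 0]%N 0%Z 0%Z.
- exists (((2 * s - 2 + t) %/ 3)%Z, ((t - s + 1) %/ 3)%Z, inord 2).
  face_by turn240 [:: 1; 0; 1; 0; 1; 0; 1; 0]%N (-1)%Z 0%Z.
- exists (((2 * s - 4 + t) %/ 3)%Z + 1, ((t - s + 2) %/ 3)%Z, inord 28).
  face_by turn240 [:: 1; 0]%N (-1)%Z 1%Z.
Qed.

Lemma turn300_fixes_face s t : exists x, same_face K (rotation turn300 s t x) x.
Proof. by exists (s + t, - s, inord 2); face_by turn300 [:: 1; 0; 1; 0]%N 0%Z 0%Z. Qed.

Lemma rotation_fixes_face p s t : p \in turns -> exists x, same_face K (rotation p s t x) x.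
Proof.
rewrite !inE => /or4P [|||/orP []] /eqP ->;
  [exact: turn60_fixes_face | exact: turn120_fixes_face | exact: turn180_fixes_face
  | exact: turn240_fixes_face | exact: turn300_fixes_face].
Qed.

(* Local invariants of a flag position: whether the given words close up at
   it (triangular, square or hexagonal face; vertex of degree 3 at either end
   of the edge). Automorphisms preserve them. *)
Definition closed_at (w : seq nat) (k : nat) : bool := wappN w (0, 0, k) == (0, 0, k).

Definition probes : seq (seq nat) :=
  [:: [:: 0; 1; 0; 1; 0; 1]; [:: 1; 2; 1; 2; 1; 2]; [:: 0; 1; 2; 1; 2; 1; 2; 0];
      [:: 0; 1; 0; 1; 0; 1; 0; 1]; [:: 0; 1; 0; 1; 0; 1; 0; 1; 0; 1; 0; 1]]%N.

Definition like_base (k : nat) : bool :=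
  all (fun w => closed_at w k == closed_at w 0) probes.

(* The positions an orientation-preserving automorphism can send x0 to:
   x0 itself and its images under the five rotations. *)
Definition base_images : seq nat := 0%N :: [seq p.2 | p <- turns].

Definition images_check (tree : seq (nat * seq nat)) : bool :=
  all (fun k => ~~ odd (size (tree_word tree k)) ==> like_base k ==> (k \in base_images))
      (iota 0 120).

Lemma images_ok : images_check span_tree.
Proof. by vm_compute. Qed.

Lemma aut_like_base g : commK g -> injective g -> like_base (g x0).2.
Proof.
move=> gc ginj; case E : (g x0) => [[s t] k]; apply/allP => w _.
have -> : closed_at w k = (wapp w (g x0) == g x0).
  rewrite E (tr_local s t) wapp_tr (inj_eq (can_inj (trK s t))) -(inj_eq piK_inj).
  by rewrite piK_wapp.
by rewrite -(wapp_comm w x0 gc) (inj_eq ginj) -(inj_eq piK_inj) piK_wapp.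
Qed.

Lemma even_aut_classify g : commK g -> injective g -> ~~ odd_pos (g x0).2 ->
  (exists s t, g =1 tr s t) \/ (exists p s t, p \in turns /\ g =1 rotation p s t).
Proof.
move=> gc ginj; have := aut_like_base gc ginj.
case E : (g x0) => [[s t] k]; rewrite [X in odd_pos X]/= /odd_pos => hlike heven.
have := images_ok; rewrite /images_check => /allP /(_ k).
rewrite mem_iota ltn_ord => /(_ isT) /implyP /(_ heven) /implyP /(_ hlike).
rewrite inE => /orP [/eqP k0 | /mapP [p hp ek]].
  left; exists s, t; apply: commK_eq; [exact: gc | exact: tr_comm |].
  by rewrite E; apply: piK_inj; rewrite /= k0 !add0r.
right; exists p, s, t; split; first exact: hp.
apply: (commK_eq gc (rotation_comm s t hp)).
by rewrite E; apply: piK_inj; rewrite (rotation_x0 s t hp) -ek.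
Qed.

Definition half_turn : KF -> KF := rotation turn180 0 0.

Lemma half_turn_comm : commK half_turn.
Proof. exact: (@rotation_comm turn180 0 0 isT). Qed.

Lemma half_turnK : involutive half_turn.
Proof.
have hA := @turn_affine_ok turn180 isT.
apply: (@commK_eq (half_turn \o half_turn) id) => [i x | // | ].
- by rewrite /comp !half_turn_comm.
- by apply: piK_inj; rewrite /comp /half_turn /rotation !(piK_aff _ _ _ hA); vm_compute.
Qed.

Lemma half_turn_tr a b x : half_turn (tr a b x) = tr (- a) (- b) (half_turn x).
Proof.
have hA := @turn_affine_ok turn180 isT.
apply: piK_inj; rewrite /half_turn /rotation (piK_aff _ _ _ hA) !piK_tr (piK_aff _ _ _ hA).
by rewrite [turn180.1]/= affN_tr; congr trN; ring.
Qed.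

Definition sym (e : bool) (a b : int) (x : KF) : KF :=
  tr a b (if e then half_turn x else x).

Lemma sym_comm e a b : commK (sym e a b).
Proof. by move=> i x; rewrite /sym; case: e; rewrite ?half_turn_comm tr_comm. Qed.

Lemma sym_inverse e a b :
  exists a' b', cancel (sym e a b) (sym e a' b') /\ cancel (sym e a' b') (sym e a b).
Proof.
case: e; last by exists (- a), (- b); split => x; rewrite /sym ?trK ?trNK.
by exists a, b; split => x; rewrite /sym half_turn_tr half_turnK trNK.
Qed.

Section Quotient.
Variables (XF : finType) (X : mapstr XF) (Gam : (KF -> KF) -> Prop) (eta : KF -> XF).
Hypothesis quot : is_quotient_map K X Gam eta.

Definition rhoX (i : nat) : XF -> XF :=
  match i with 0%N => rho0 X | 1%N => rho1 X | _ => rho2 X end.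

Lemma eta_rho i x : eta (rho i x) = rhoX i (eta x).
Proof. by case: quot => H _ _; case: i => [|[|i]] /=; case: (H x). Qed.

Lemma eta_deck g : Gam g -> forall x, eta (g x) = eta x.
Proof. by case: quot => _ _ H hg x; symmetry; apply/H; exists g. Qed.

Lemma colour_wapp (c : XF -> bool) :
  (forall z, [/\ c (rho0 X z) = ~~ c z, c (rho1 X z) = ~~ c z & c (rho2 X z) = ~~ c z]) ->
  forall w x, c (eta (wapp w x)) = odd (size w) (+) c (eta x).
Proof.
move=> hc; elim=> [|i w IH] x //=; rewrite IH eta_rho; have [h0 h1 h2] := hc (eta x).
by case: i => [|[|i]] /=; rewrite ?h0 ?h1 ?h2 addbN addNb.
Qed.

Lemma deck_even g : orientable X -> Gam g -> ~~ odd_pos (g x0).2.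
Proof.
move=> [c hc] hg; have [w [hw <-]] := reach_all (g x0).
have := colour_wapp hc w x0; rewrite hw (eta_deck hg).
by case: (odd _); case: (c _).
Qed.

Lemma deck_translation : is_aut_subgroup K Gam -> no_fixed_cells K Gam ->
  orientable X -> forall g, Gam g -> exists s t, g =1 tr s t.
Proof.
move=> [_ _ _ haut] hnf hor g hg; have [gbij _] := haut g hg.
have [//|[p [s [t [hp hgE]]]]] :=
  even_aut_classify (aut_commK (haut g hg)) (bij_inj gbij) (deck_even hor hg).
have hp0 : p.2 != 0%N := allP (isT : all (fun p => p.2 != 0%N) turns) p hp.
have moved : exists x, g x <> x.
  exists x0; move/(congr1 piK); rewrite hgE (rotation_x0 s t hp) => -[_ _ /eqP].
  by rewrite (negbTE hp0).
have [x hx] := rotation_fixes_face s t hp.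
by have [_ _] := hnf g hg moved x; rewrite hgE.
Qed.

Definition normalises (F : KF -> KF) : Prop :=
  forall g, Gam g -> exists2 g', Gam g' & forall x, F (g x) = g' (F x).

Lemma normalises_eta F x y : normalises F -> eta x = eta y -> eta (F x) = eta (F y).
Proof.
move=> nF exy; have [_ _ he] := quot; move/he: exy => [g hg <-].
by have [g' hg' ->] := nF g hg; rewrite (eta_deck hg').
Qed.

Lemma descend F F' : commK F -> cancel F F' -> cancel F' F ->
  normalises F -> normalises F' -> exists a, is_aut X a /\ forall x, a (eta x) = eta (F x).
Proof.
move=> hF c1 c2 nF nF'; case: quot => hr hs _.
have lift z : exists x, eta x == z by have [x <-] := hs z; exists x.
pose p z := xchoose (lift z); have pK z : eta (p z) = z := eqP (xchooseP (lift z)).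
pose a z := eta (F (p z)); pose b z := eta (F' (p z)).
have aE x : a (eta x) = eta (F x) by apply: normalises_eta; rewrite ?pK.
have bE x : b (eta x) = eta (F' x) by apply: normalises_eta; rewrite ?pK.
exists a; split => //; split.
  by exists b => z; have [x <-] := hs z; rewrite ?aE ?bE ?c1 ?c2 ?aE ?bE.
move=> z; have [x <-] := hs z; have [e0 e1 e2] := hr x; have [f0 f1 f2] := hr (F x).
rewrite -e0 -e1 -e2 !aE -f0 -f1 -f2.
by split; congr eta; [exact: (hF 0%N x) | exact: (hF 1%N x) | exact: (hF 2%N x)].
Qed.

(* When the deck transformations are translations, the symmetries [sym]
   normalise the deck group: translations commute with them, and the
   half-turn conjugates a translation to its inverse. *)
Lemma sym_normalises e a b : is_aut_subgroup K Gam ->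
  (forall g, Gam g -> exists s t, g =1 tr s t) -> normalises (sym e a b).
Proof.
move=> [_ _ hinv _] htr g hg; have [s [t hgE]] := htr g hg.
have [h hh [gh _]] := hinv g hg; have [s' [t' hhE]] := htr h hh.
have [es et] : s' = - s /\ t' = - t.
  by have := gh x0; rewrite hgE hhE tr_tr => /(congr1 piK); rewrite piK_tr => -[]; lia.
rewrite {}es {}et in hhE.
case: e.
  by exists h => // x; rewrite /sym hgE hhE half_turn_tr !tr_tr [_ + a]addrC [_ + b]addrC.
by exists g => // x; rewrite /sym !hgE !tr_tr [_ + a]addrC [_ + b]addrC.
Qed.

Lemma vclass_rho12 z : involutive (rho1 X) -> involutive (rho2 X) ->
  vclass X (rho1 X z) = vclass X z /\ vclass X (rho2 X z) = vclass X z.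
Proof.
move=> i1 i2; split; apply/setP => y; rewrite !inE; apply/idP/idP => h;
  apply: (connect_trans _ h); apply: connect1; rewrite /vrel ?i1 ?i2 eqxx ?orbT //.
Qed.

Lemma vclass_wapp w x : involutive (rho1 X) -> involutive (rho2 X) ->
  all (fun i => 0 < i)%N w -> vclass X (eta (wapp w x)) = vclass X (eta x).
Proof.
move=> i1 i2; elim: w x => [//|i w IH] x /= /andP [hi hw].
rewrite IH // eta_rho; have [h1 h2] := vclass_rho12 (eta x) i1 i2.
by case: i hi => [|[|i]] _ //=.
Qed.

End Quotient.

(* Nine representative positions, one on each pair of vertex orbits
   exchanged by the half-turn (the fundamental domain has 18 vertices). *)
Definition rep_positions : seq nat := [:: 0; 6; 14; 40; 46; 52; 80; 88; 94]%N.

Definition rep_image (ht : seq (int * int * nat)) (e : bool) (r : nat) : KN :=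
  if e then affN turn180.1 ht 0 0 (0, 0, r) else (0, 0, r).

(* Every position k lies on the vertex of a representative or of its
   half-turn image: a word in rho1, rho2 (found by search around that
   vertex) leads there without changing the translate. *)
Definition cover_check (ht : seq (int * int * nat)) : bool :=
  all (fun k => has (fun r => has (fun e =>
         let y := rep_image ht e r in
         let w := tree_word (bfs [:: 1; 2]%N y.2) k in
         all (fun i => 0 < i)%N w && (wappN w y == (y.1.1, y.1.2, k)))
       [:: false; true]) rep_positions) (iota 0 120).

Lemma cover_ok : cover_check (rot_table turn180.1 turn180.2).
Proof. by vm_compute. Qed.

Lemma vertex_cover (x : KF) : exists r e a b w,
  [/\ r \in rep_positions, all (fun i => 0 < i)%N w & x = wapp w (sym e a b (0, 0, inord r))].
Proof.
have hA := @turn_affine_ok turn180 isT.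
case: x => [[s t] k]; have := cover_ok; rewrite /cover_check => /allP /(_ k).
rewrite mem_iota ltn_ord => /(_ isT) /hasP [r hr /hasP [e _]].
have hr120 : (r < 120)%N := allP (isT : all (fun r => r < 120)%N rep_positions) r hr.
have -> : rep_image (rot_table turn180.1 turn180.2) e r =
          piK (if e then half_turn (0, 0, inord r) else (0, 0, inord r)).
  by case: e; rewrite /half_turn /rotation ?(piK_aff _ _ _ hA) /= inordK.
case E : (if e then _ else _) => [[c1 c2] m] /andP [hw /eqP hW].
exists r, e, (s - c1), (t - c2), (tree_word (bfs [:: 1; 2]%N m) k).
split; [exact: hr | exact: hw |].
rewrite /sym E wapp_tr; apply: piK_inj; rewrite piK_tr piK_wapp hW /=.
by congr (_, _, _); lia.
Qed.

Local Close Scope ring_scope.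

Theorem theorem1 (XF : finType) (X : mapstr XF)
    (Gam : (KF -> KF) -> Prop) (eta : KF -> XF) :
  is_aut_subgroup K Gam ->
  no_fixed_cells K Gam ->
  is_quotient_map K X Gam eta ->
  is_torus_map X ->
  polyhedral X ->
  exists reps : seq XF,
    size reps <= 9 /\
    forall x : XF, exists a : XF -> XF,
      is_aut X a /\ exists2 y, y \in reps & vclass X (a y) = vclass X x.
Proof.
move=> hsub hnf quot [[[_ i1 i2] _ _ _] hor _] _.
have htr := deck_translation quot hsub hnf hor.
pose base r : XF := eta (0%R, 0%R, inord r).
exists (map base rep_positions); split; first by rewrite size_map.
move=> z; have [_ hs _] := quot; have [x <-] := hs z.
have [r [e [a [b [w [hr hw ->]]]]]] := vertex_cover x.
have [a' [b' [c1 c2]]] := sym_inverse e a b.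
have [f [haut fE]] := descend quot (sym_comm e a b) c1 c2
  (sym_normalises e a b hsub htr) (sym_normalises e a' b' hsub htr).
exists f; split; first exact: haut.
exists (base r); first exact: map_f.
by rewrite fE (vclass_wapp quot _ i1 i2 hw).
Qed.
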